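(* In the setting below: (1) If $f,g:X\to Y$ are $\Gamma$-equivariant with $d_p(f,g)<\infty$, then $f\in B(X,Y)$ if and only if $g\in B(X,Y)$. (2) If $f\in B(X,Y)$ then $\mathcal E^{(p)}_{\mu^n}(f)<\infty$ for all $n\ge1$.
   Context: Let $p\ge2$ and $(Y,d_Y)$ a complete geodesic metric space which is $p$-uniformly convex with constant $c_Y>0$ (i.e. $d_Y(x,\gamma(t))^p\le(1-t)d_Y(x,y)^p+t\,d_Y(x,z)^p-c_Y^pt(1-t)d_Y(y,z)^p$ for all $x,y,z$, constant-speed geodesics $\gamma$ from $y$ to $z$, $t\in[0,1]$). Let $\Gamma$ be a discrete group acting freely on a discrete set $X$ and by isometries on $Y$. A random walk $\mu$ on $X$ assigns to each $x$ a finitely supported probability measure $\mu(x\to\cdot)$; assume $\mu$ is $\Gamma$-equivariant ($\mu(\gamma x\to\gamma x')=\mu(x\to x')$). $\mu^1=\mu$, $\mu^{n+1}(x\to x'')=\sum_{x'}\mu^n(x\to x')\mu(x'\to x'')$. Let $\bar\nu$ be a probability measure on $\Gamma\backslash X$, $\nu(\{x\})=\bar\nu(\{\Gamma x\})$, and assume reversibility $\nu(x)\mu(x\to x')=\nu(x')\mu(x'\to x)$. For equivariant $f$ and equivariant random walk $\eta$: $\mathcal E^{(p)}_\eta(f)=\frac12\int_{\Gamma\backslash X}\sum_{x'}\eta(x\to x')d_Y(f(x),f(x'))^p\,d\bar\nu(x)$. $B(X,Y)$ = equivariant $f$ with $\mathcal E^{(p)}_\mu(f)<\infty$. For equivariant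 $f,g$: $d_p(f,g)=\big(\int_{\Gamma\backslash X}d_Y(f(x),g(x))^p\,d\bar\nu(x)\big)^{1/p}$. *)

From HB Require Import structures.
From mathcomp Require Import all_boot all_order all_algebra.
From mathcomp Require Import all_classical all_reals all_analysis.
Set Implicit Arguments. Unset Strict Implicit. Unset Printing Implicit Defensive.
Import Order.TTheory GRing.Theory Num.Theory.
Local Open Scope classical_set_scope.
Local Open Scope ring_scope.

Definition is_group (G : Type) (mul : G -> G -> G) (one : G) (inv : G -> G) :=
  [/\ forall a b c, mul a (mul b c) = mul (mul a b) c,
      forall a, mul one a = a &
      forall a, mul (inv a) a = one].

Definition is_action (G T : Type) (mul : G -> G -> G) (one : G)
  (act : G -> T -> T) :=
  (forall t, act one t = t) /\
  (forall g h t, act (mul g h) t = act g (act h t)).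

Definition free_action (G T : Type) (one : G) (act : G -> T -> T) :=
  forall g t, act g t = t -> g = one.

Section Metric.
Context {R : realType} {Y : Type} (d : Y -> Y -> R).

Definition is_metric :=
  [/\ forall y z, 0 <= d y z,
      forall y z, d y z = 0 <-> y = z,
      forall y z, d y z = d z y &
      forall x y z, d x z <= d x y + d y z].

Definition complete_metric :=
  forall u : nat -> Y,
    (forall e : R, 0 < e -> exists N : nat, forall m n : nat,
        (N <= m)%N -> (N <= n)%N -> d (u m) (u n) < e) ->
    exists y : Y, forall e : R, 0 < e -> exists N : nat, forall n : nat,
        (N <= n)%N -> d (u n) y < e.

Definition cs_geodesic (y z : Y) (gam : R -> Y) :=
  [/\ gam 0 = y, gam 1 = z &
      forall s t : R, 0 <= s <= 1 -> 0 <= t <= 1 ->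
        d (gam s) (gam t) = `|s - t| * d y z].

Definition geodesic_space := forall y z : Y, exists gam, cs_geodesic y z gam.

Definition p_uniformly_convex (p c : R) :=
  forall (x y z : Y) (gam : R -> Y), cs_geodesic y z gam ->
  forall t : R, 0 <= t <= 1 ->
    d x (gam t) `^ p <=
      (1 - t) * d x y `^ p + t * d x z `^ p
      - c `^ p * t * (1 - t) * d y z `^ p.

Definition isometric_action (G : Type) (act : G -> Y -> Y) :=
  forall g y z, d (act g y) (act g z) = d y z.
End Metric.

Section Walks.
Context {R : realType} {X : choiceType}.

(* mu x x' = mu(x -> x') *)
Definition random_walk (mu : X -> X -> R) :=
  forall x, [/\ forall x', 0 <= mu x x',
                finite_set [set x' | mu x x' != 0] &
                (\esum_(x' in setT) (mu x x')%:E = 1)%E].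

Definition equivariant_walk (G : Type) (act : G -> X -> X) (mu : X -> X -> R) :=
  forall g x x', mu (act g x) (act g x') = mu x x'.

Fixpoint mupow (mu : X -> X -> R) (n : nat) : X -> X -> \bar R :=
  match n with
  | 0%N => fun x x' => (if `[< x = x' >] then 1 else 0)%:E
  | n'.+1 => fun x x'' =>
      (\esum_(x' in setT) (mupow mu n' x x' * (mu x' x'')%:E))%E
  end.

Definition equivariant_map (G Y : Type) (actX : G -> X -> X) (actY : G -> Y -> Y)
  (f : X -> Y) := forall g x, f (actX g x) = actY g (f x).

(* Integrals over Gamma\X w.r.t. the discrete probability measure nubar on the
   orbit type Q; rep q is a chosen point of the orbit q (integrands are
   Gamma-invariant, so the choice is irrelevant). *)
Context {Q : choiceType} {Y : Type}.

Definition energy (d : Y -> Y -> R) (p : R) (nubar : Q -> R) (rep : Q -> X)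
  (eta : X -> X -> \bar R) (f : X -> Y) : \bar R :=
  ((2^-1)%:E *
   \esum_(q in setT) ((nubar q)%:E *
      \esum_(x' in setT) (eta (rep q) x' * (d (f (rep q)) (f x') `^ p)%:E)))%E.

Definition dist_p (d : Y -> Y -> R) (p : R) (nubar : Q -> R) (rep : Q -> X)
  (f g : X -> Y) : \bar R :=
  (poweR (\esum_(q in setT) (nubar q * d (f (rep q)) (g (rep q)) `^ p)%:E)
     p^-1)%E.

Definition in_B (G : Type) (actX : G -> X -> X) (actY : G -> Y -> Y)
  (d : Y -> Y -> R) (p : R) (nubar : Q -> R) (rep : Q -> X)
  (mu : X -> X -> R) (f : X -> Y) :=
  equivariant_map actX actY f /\
  (energy d p nubar rep (fun x x' => (mu x x')%:E) f < +oo)%E.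
End Walks.

From HB Require Import structures.
From mathcomp Require Import all_boot all_order all_algebra.
From mathcomp Require Import all_classical all_reals all_analysis.
From mathcomp Require Import lra.
Import Order.TTheory GRing.Theory Num.Theory.
Local Open Scope classical_set_scope.
Local Open Scope ring_scope.

(* Writing E(f) for the energy and D for d_p(f, g)^p, the triangle inequality
   gives d(g x, g x')^p <= 2^p d(g x, f x)^p + 4^p (d(f x, f x')^p + d(f x', g x')^p).
   Integrated against nubar (x) mu, the middle term yields E(f) and both outer
   terms yield D: the first since mu(x -> .) is a probability, the last since
   nubar is stationary for mu on Gamma-invariant functions. Stationarity comes
   from reversibility and the freeness of the action, which makes the mass
   sent by an orbit to the set of representatives equal to 1. In the same way,
   integrating out the last step of the walk and going through the point
   reached after n steps gives E_{mu^(n+1)}(f) <= 2^p (E_{mu^n}(f) + E_mu(f)). *)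

Set Implicit Arguments. Unset Strict Implicit. Unset Printing Implicit Defensive.

Section ExtendedSums.
Context {R : realType}.
Local Open Scope ereal_scope.

Lemma esum_ge_term (T : choiceType) (S : set T) (a : T -> \bar R) i :
  S i -> (forall x, 0 <= a x) -> a i <= \esum_(j in S) a j.
Proof.
move=> Si a0; apply: esum_ge; exists [set i]; last by rewrite fsbig_set1.
by split; [exact: finite_set1 | move=> x ->].
Qed.

Lemma esumZl (T : choiceType) (S : set T) (a : T -> \bar R) (c : \bar R) :
  0 <= c -> (forall x, 0 <= a x) ->
  \esum_(i in S) (c * a i) = c * \esum_(i in S) a i.
Proof.
move=> c0 a0; case: c c0 => [r c0 | _ | //].
  rewrite /esum -ereal_supZl //; last first.
    by apply/set0P; exists 0; exists set0; [exact: fsets_set0 | rewrite fsbig_set0].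
  congr ereal_sup; apply/seteqP; split=> x /=.
    move=> [A SA <-]; exists (\sum_(i \in A) a i); first by exists A.
    by rewrite ge0_mule_fsumr.
  by move=> [y [A SA <-] <-]; exists A => //; rewrite ge0_mule_fsumr.
(* For c = +oo both sides vanish if all the a i do, and are +oo otherwise. *)
have [sum0 | sum_neq0] := eqVneq (\esum_(i in S) a i) 0.
  have a_eq0 i : S i -> a i = 0.
    by move=> Si; apply/eqP; rewrite eq_le a0 andbT -sum0 esum_ge_term.
  by rewrite sum0 mule0 esum1 // => i Si; rewrite a_eq0 // mule0.
have [[i Si ai_gt0] | all_eq0] := pselect (exists2 i, S i & 0 < a i); last first.
  move: sum_neq0; rewrite esum1 ?eqxx // => j Sj.
  apply/eqP; rewrite eq_le a0 andbT leNgt.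
  by apply/negP => aj_gt0; apply: all_eq0; exists j.
have sum_gt0 : 0 < \esum_(j in S) a j by rewrite (lt_le_trans ai_gt0) // esum_ge_term.
rewrite gt0_mulye //; apply/eqP; rewrite eq_le leey /=.
have := @esum_ge_term T S (fun j => +oo * a j) i Si.
by rewrite gt0_mulye //; apply => x; exact: mule_ge0.
Qed.

Lemma esumZr (T : choiceType) (S : set T) (a : T -> \bar R) (c : \bar R) :
  0 <= c -> (forall x, 0 <= a x) ->
  \esum_(i in S) (a i * c) = (\esum_(i in S) a i) * c.
Proof.
by move=> c0 a0; rewrite muleC -esumZl //; apply: eq_esum => i _; exact: muleC.
Qed.

Lemma exchange_esum (T1 T2 : choiceType) (a : T1 -> T2 -> \bar R) :
  (forall i j, 0 <= a i j) ->
  \esum_(i in [set: T1]) \esum_(j in [set: T2]) a i j =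
  \esum_(j in [set: T2]) \esum_(i in [set: T1]) a i j.
Proof.
move=> a0; rewrite !esum_esum //.
rewrite (reindex_esum ([set: T2] `*`` (fun=> [set: T1])) _ (fun k => (k.2, k.1))) //.
split=> //=.
- by move=> [i1 i2] [j1 j2] /= _ _ [] -> ->.
- by move=> [i1 i2] _ /=; exists (i2, i1).
Qed.

Lemma esum_delta (T : choiceType) (x : T) (F : T -> \bar R) :
  (forall y, 0 <= F y) ->
  \esum_(y in [set: T]) ((if `[< x = y >] then 1 else 0)%:E * F y) = F x.
Proof.
move=> F0.
rewrite (esumID [set x]); last by move=> i _; case: ifP => _; rewrite ?mul1e ?mul0e.
rewrite setTI esum_set1; last by case: ifP => _; rewrite ?mul1e ?mul0e.
rewrite esum1 ?adde0; first by rewrite asboolT // mul1e.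
by move=> i [_ /= neq_ix]; rewrite asboolF ?mul0e // => eq_xi; apply: neq_ix.
Qed.

Lemma esum_fibers (T Q : choiceType) (pi : T -> Q) (F : T -> \bar R) :
  (forall x, 0 <= F x) ->
  \esum_(x in [set: T]) F x =
  \esum_(q in [set: Q]) \esum_(x in [set x | pi x = q]) F x.
Proof.
move=> F0; rewrite esum_esum //.
rewrite (reindex_esum ([set: Q] `*`` (fun q => [set x | pi x = q])) [set: T] snd F) //.
split=> //.
- move=> [q1 x1] [q2 x2]; rewrite !in_setE /= => -[_ eq1] [_ eq2] eqx.
  by rewrite -eq1 -eq2 eqx.
- by move=> x _; exists (pi x, x).
Qed.

Lemma gt0_mule_lt_pinfty (c : R) (x : \bar R) :
  (0 < c)%R -> (c%:E * x < +oo) = (x < +oo).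
Proof.
move=> c0; case: x => [r | | ] /=; rewrite ?ltry //.
- by rewrite muleC gt0_mulye ?lte_fin.
- by rewrite muleC gt0_mulNye ?lte_fin.
Qed.

End ExtendedSums.

Lemma powR_addr_le (R : realType) (a b p : R) :
  0 <= a -> 0 <= b -> 0 <= p ->
  (a + b) `^ p <= 2 `^ p * (a `^ p + b `^ p).
Proof.
move=> a0 b0 p0.
wlog le_ab : a b a0 b0 / a <= b.
  move=> hwlog; have [/hwlog | /ltW/hwlog] := lerP a b; first exact.
  by rewrite addrC [a `^ p + _]addrC; apply.
apply: (@le_trans _ _ ((2 * b) `^ p)).
  by apply: ge0_ler_powR; rewrite ?nnegrE //; lra.
have two_ge0 : 0 <= 2 :> R by lra.
by rewrite powRM // ler_wpM2l ?powR_ge0 // lerDr powR_ge0.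
Qed.

Lemma dist_powR_le (R : realType) (Y : Type) (d : Y -> Y -> R) (p : R) :
  is_metric d -> 0 <= p -> forall x y z,
  d x z `^ p <= 2 `^ p * (d x y `^ p + d y z `^ p).
Proof.
move=> [d_ge0 _ _ d_triangle] p0 x y z.
apply: le_trans (powR_addr_le (d_ge0 _ _) (d_ge0 _ _) p0).
by apply: ge0_ler_powR => //; rewrite nnegrE ?addr_ge0.
Qed.

Section GroupAction.
Context {G : Type} {mul : G -> G -> G} {one : G} {inv : G -> G}.
Hypothesis G_group : is_group mul one inv.

Lemma grp_mulgV a : mul a (inv a) = one.
Proof.
have [mulA mul1g mulVg] := G_group.
have -> : mul a (inv a) = mul (mul (inv (inv a)) (inv a)) (mul a (inv a)).
  by rewrite mulVg mul1g.
by rewrite -mulA (mulA (inv a)) mulVg mul1g mulVg.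
Qed.

Lemma grp_mulg1 a : mul a one = a.
Proof.
have [mulA mul1g mulVg] := G_group.
by rewrite -(mulVg a) mulA grp_mulgV mul1g.
Qed.

Lemma grp_invK a : inv (inv a) = a.
Proof.
have [mulA mul1g mulVg] := G_group.
by rewrite -[LHS]grp_mulg1 -(mulVg a) mulA mulVg mul1g.
Qed.

Context {T : Type} {act : G -> T -> T}.
Hypothesis act_action : is_action mul one act.

Lemma actK g : cancel (act g) (act (inv g)).
Proof.
have [_ _ mulVg] := G_group; have [act1 actM] := act_action.
by move=> x; rewrite -actM mulVg act1.
Qed.

Lemma actVK g : cancel (act (inv g)) (act g).
Proof.
have [act1 actM] := act_action.
by move=> x; rewrite -actM grp_mulgV act1.
Qed.

Lemma act_inj g : injective (act g).
Proof. exact: can_inj (actK g). Qed.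

Lemma free_act_inj : free_action one act ->
  forall g h x, act g x = act h x -> g = h.
Proof.
move=> act_free g h x eq_gh.
have [mulA mul1g mulVg] := G_group; have [act1 actM] := act_action.
have /act_free hVg_eq1 : act (mul (inv h) g) x = x by rewrite actM eq_gh actK.
by rewrite -[g]mul1g -(grp_mulgV h) -mulA hVg_eq1 grp_mulg1.
Qed.

End GroupAction.

Section WalkPowers.
Context {R : realType} {X : choiceType}.
Context {mu : X -> X -> R}.
Hypothesis mu_ge0 : forall x y, 0 <= mu x y.
Local Open Scope ereal_scope.

Lemma mupow_ge0 n x y : 0 <= mupow mu n x y.
Proof.
elim: n x y => [|n IH] x y /=; first by case: ifP.
by apply: esum_ge0 => z _; apply: mule_ge0; rewrite ?lee_fin.
Qed.

Lemma mupowS_esum n x (u : X -> \bar R) : (forall y, 0 <= u y) ->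
  \esum_(y in [set: X]) (mupow mu n.+1 x y * u y) =
  \esum_(z in [set: X]) (mupow mu n x z * \esum_(y in [set: X]) ((mu z y)%:E * u y)).
Proof.
move=> u0 /=.
have mu_u_ge0 z y : 0 <= (mu z y)%:E * u y by apply: mule_ge0; rewrite ?lee_fin.
transitivity (\esum_(y in [set: X]) \esum_(z in [set: X])
                 (mupow mu n x z * ((mu z y)%:E * u y))).
  apply: eq_esum => y _; rewrite -esumZr //.
    by apply: eq_esum => z _; rewrite muleA.
  by move=> z; apply: mule_ge0; rewrite ?mupow_ge0 ?lee_fin.
rewrite exchange_esum; last by move=> y z; apply: mule_ge0; rewrite ?mupow_ge0.
by apply: eq_esum => z _; rewrite esumZl ?mupow_ge0.
Qed.

End WalkPowers.

(* The integral over Gamma\X of x |-> sum_x' eta(x -> x') h x x', evaluated on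
   the representatives [rep q]; [energy d p nubar rep eta f] is half of it for
   h = [pdist d p f f]. *)
Definition kernel_integral (R : realType) (X Q : choiceType) (nubar : Q -> R)
    (rep : Q -> X) (eta h : X -> X -> \bar R) : \bar R :=
  (\esum_(q in [set: Q]) ((nubar q)%:E *
     \esum_(x' in [set: X]) (eta (rep q) x' * h (rep q) x')))%E.

Section KernelIntegral.
Context {R : realType} {X Q : choiceType} {nubar : Q -> R} {rep : Q -> X}.
Hypothesis nubar_ge0 : forall q, 0 <= nubar q.
Local Open Scope ereal_scope.

Context {eta : X -> X -> \bar R}.
Hypothesis eta_ge0 : forall x x', 0 <= eta x x'.

Lemma le_kernel_integral (h1 h2 : X -> X -> \bar R) :
  (forall x x', h1 x x' <= h2 x x') ->
  kernel_integral nubar rep eta h1 <= kernel_integral nubar rep eta h2.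
Proof.
move=> le_h; apply: le_esum => q _; rewrite lee_wpmul2l ?lee_fin //.
by apply: le_esum => x' _; rewrite lee_wpmul2l.
Qed.

Lemma esum_kernel_ge0 (h : X -> X -> \bar R) x : (forall x x', 0 <= h x x') ->
  0 <= \esum_(x' in [set: X]) (eta x x' * h x x').
Proof. by move=> h_ge0; apply: esum_ge0 => x' _; rewrite mule_ge0. Qed.

Lemma kernel_integralD (h1 h2 : X -> X -> \bar R) :
  (forall x x', 0 <= h1 x x') -> (forall x x', 0 <= h2 x x') ->
  kernel_integral nubar rep eta (fun x x' => h1 x x' + h2 x x') =
  kernel_integral nubar rep eta h1 + kernel_integral nubar rep eta h2.
Proof.
move=> h1_ge0 h2_ge0.
rewrite /kernel_integral -esumD => [|q _|q _]; last 2 first.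
- by rewrite mule_ge0 ?lee_fin ?esum_kernel_ge0.
- by rewrite mule_ge0 ?lee_fin ?esum_kernel_ge0.
apply: eq_esum => q _; rewrite -ge0_muleDr ?esum_kernel_ge0 //; congr (_ * _).
rewrite -esumD => [|x' _|x' _]; last 2 first.
- by rewrite mule_ge0.
- by rewrite mule_ge0.
by apply: eq_esum => x' _; rewrite ge0_muleDr.
Qed.

Lemma kernel_integralZl (c : R) (h : X -> X -> \bar R) :
  (0 <= c)%R -> (forall x x', 0 <= h x x') ->
  kernel_integral nubar rep eta (fun x x' => c%:E * h x x') =
  c%:E * kernel_integral nubar rep eta h.
Proof.
move=> c0 h_ge0; rewrite /kernel_integral -esumZl ?lee_fin //; last first.
  by move=> q; rewrite mule_ge0 ?lee_fin ?esum_kernel_ge0.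
apply: eq_esum => q _; rewrite muleCA; congr (_ * _).
rewrite -esumZl ?lee_fin //; last by move=> x'; rewrite mule_ge0.
by apply: eq_esum => x' _; rewrite muleCA.
Qed.

Lemma kernel_integral_lt_pinfty (c : R) (h h1 h2 : X -> X -> \bar R) :
  (0 <= c)%R -> (forall x x', 0 <= h1 x x') -> (forall x x', 0 <= h2 x x') ->
  (forall x x', h x x' <= c%:E * (h1 x x' + h2 x x')) ->
  kernel_integral nubar rep eta h1 < +oo -> kernel_integral nubar rep eta h2 < +oo ->
  kernel_integral nubar rep eta h < +oo.
Proof.
move=> c0 h1_ge0 h2_ge0 le_h fin1 fin2.
apply: le_lt_trans (le_kernel_integral le_h) _.
rewrite kernel_integralZl ?kernel_integralD // => [|x x']; last by rewrite adde_ge0.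
by rewrite lte_mul_pinfty ?lee_fin ?lte_add_pinfty.
Qed.

End KernelIntegral.

Definition pdist (R : realType) (Y X : Type) (d : Y -> Y -> R) (p : R)
    (f g : X -> Y) (x x' : X) : \bar R :=
  (d (f x) (g x') `^ p)%:E.

Section PowerDistance.
Context {R : realType} {Y X : Type} {d : Y -> Y -> R} {p : R}.
Hypotheses (d_metric : is_metric d) (p_ge0 : 0 <= p).
Local Open Scope ereal_scope.

Lemma pdist_ge0 (f g : X -> Y) x x' : 0 <= pdist d p f g x x'.
Proof. by rewrite lee_fin powR_ge0. Qed.

Lemma le_pdist (f g : X -> Y) x x' y :
  pdist d p f g x x' <= (2 `^ p)%:E * ((d (f x) y `^ p)%:E + (d y (g x') `^ p)%:E).
Proof. by rewrite -EFinD -EFinM lee_fin dist_powR_le. Qed.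

End PowerDistance.

Section EquivariantWalk.
Context {R : realType} {G : Type} {X Q : choiceType}.
Context {mul : G -> G -> G} {one : G} {inv : G -> G} {actX : G -> X -> X}.
Context {orb : X -> Q} {rep : Q -> X} {mu : X -> X -> R} {nubar : Q -> R}.
Hypotheses (G_group : is_group mul one inv) (actX_action : is_action mul one actX).
Hypothesis actX_free : free_action one actX.
Hypothesis orb_rep : forall q, orb (rep q) = q.
Hypothesis orbP : forall x x', orb x = orb x' <-> exists g, x' = actX g x.
Hypotheses (mu_walk : random_walk mu) (mu_equiv : equivariant_walk actX mu).
Hypothesis nubar_ge0 : forall q, 0 <= nubar q.
Hypothesis nubar_rev : forall x x', nubar (orb x) * mu x x' = nubar (orb x') * mu x' x.
Local Open Scope ereal_scope.

Let mu_ge0 x y : (0 <= mu x y)%R. Proof. by have [] := mu_walk x. Qed.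
Let mu_sum1 x : \esum_(y in [set: X]) (mu x y)%:E = 1. Proof. by have [] := mu_walk x. Qed.
Let mu_ge0E x y : 0 <= (mu x y)%:E. Proof. by rewrite lee_fin. Qed.

Lemma orb_act g x : orb (actX g x) = orb x.
Proof. by symmetry; apply/orbP; exists g. Qed.

Lemma esum_walk_act (F : X -> X -> \bar R) :
  (forall g x y, F (actX g x) (actX g y) = F x y) ->
  forall g x, \esum_(y in [set: X]) ((mu (actX g x) y)%:E * F (actX g x) y) =
              \esum_(y in [set: X]) ((mu x y)%:E * F x y).
Proof.
move=> F_inv g x; rewrite (reindex_esum [set: X] [set: X] (actX g)).
  by apply: eq_esum => y _; rewrite mu_equiv F_inv.
split=> // [y1 y2 _ _ | y _]; first exact: (act_inj G_group actX_action).
by exists (actX (inv g) y); rewrite ?(actVK G_group actX_action).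
Qed.

(* Writing x = a_x . rep q', equivariance turns mu x (rep q) into
   mu (rep q') (a_x^-1 . rep q), and by freeness (x, q) |-> a_x^-1 . rep q
   is a bijection from the orbit q' times Gamma\X onto X. *)
Lemma esum_orbit_walk_reps q' :
  \esum_(x in [set x | orb x = q']) \esum_(q in [set: Q]) (mu x (rep q))%:E = 1.
Proof.
have shift x : {g : G | x = actX g (rep (orb x))}.
  by apply: cid; apply/orbP; rewrite orb_rep.
pose a x := proj1_sig (shift x).
have aP x : x = actX (a x) (rep (orb x)) := proj2_sig (shift x).
pose phi (k : X * Q) := actX (inv (a k.1)) (rep k.2).
rewrite esum_esum; last by move=> x q _ _; rewrite lee_fin.
transitivity (\esum_(k in [set x | orb x = q'] `*`` (fun=> [set: Q]))
                (mu (rep q') (phi k))%:E).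
  apply: eq_esum => -[x q] [/= orb_x _]; rewrite /phi /=.
  by rewrite -(mu_equiv (a x) (rep q')) (actVK G_group actX_action) -orb_x -aP.
rewrite -(reindex_esum _ [set: X] phi (fun y => (mu (rep q') y)%:E)) //.
split=> // [[x1 q1] [x2 q2] | y _].
  rewrite !in_setE /= => -[orb_x1 _] [orb_x2 _]; rewrite /phi /= => eq_phi.
  have eq_q : q1 = q2.
    by rewrite -(orb_rep q1) -(orb_rep q2) -(orb_act (inv (a x1))) eq_phi orb_act.
  subst q2; have eq_a : a x1 = a x2.
    rewrite -(grp_invK G_group (a x1)) -(grp_invK G_group (a x2)).
    by rewrite (free_act_inj G_group actX_action actX_free eq_phi).
  by rewrite [x1]aP [x2]aP eq_a orb_x1 orb_x2.
pose x := actX (inv (a y)) (rep q').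
have orb_x : orb x = q' by rewrite /x orb_act orb_rep.
exists (x, orb y) => //.
have eq_a : a x = inv (a y).
  apply: (free_act_inj G_group actX_action actX_free (x := rep q')).
  by rewrite -[in LHS]orb_x -aP.
by rewrite /phi /= eq_a (grp_invK G_group) -aP.
Qed.

Lemma kernel_integral_walk_const (h : X -> \bar R) : (forall x, 0 <= h x) ->
  kernel_integral nubar rep (fun x y => (mu x y)%:E) (fun x _ => h x) =
  \esum_(q in [set: Q]) ((nubar q)%:E * h (rep q)).
Proof.
move=> h_ge0; apply: eq_esum => q _; congr (_ * _).
by rewrite esumZr ?mu_sum1 ?mul1e // => y; rewrite lee_fin.
Qed.

(* Reversibility moves the weight [nubar] from the start to the end point of
   each step; summing over the start points then uses [esum_orbit_walk_reps]. *)
Lemma kernel_integral_walk_invariant (h : X -> \bar R) :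
  (forall x, 0 <= h x) -> (forall g x, h (actX g x) = h x) ->
  kernel_integral nubar rep (fun x y => (mu x y)%:E) (fun _ y => h y) =
  \esum_(q in [set: Q]) ((nubar q)%:E * h (rep q)).
Proof.
move=> h_ge0 h_inv.
transitivity (\esum_(q in [set: Q]) \esum_(x in [set: X])
                 ((nubar q * mu (rep q) x)%:E * h x)).
  apply: eq_esum => q _; rewrite -esumZl ?lee_fin //.
    by apply: eq_esum => x _; rewrite muleA EFinM.
  by move=> x; rewrite mule_ge0 ?lee_fin.
rewrite exchange_esum; last by move=> q x; rewrite mule_ge0 ?lee_fin ?mulr_ge0.
transitivity (\esum_(x in [set: X])
   ((\esum_(q in [set: Q]) (mu x (rep q))%:E) * ((nubar (orb x))%:E * h x))).
  apply: eq_esum => x _; rewrite -esumZr; last 2 first.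
  - by rewrite mule_ge0 ?lee_fin.
  - by move=> q; rewrite lee_fin.
  apply: eq_esum => q _.
  have := nubar_rev (rep q) x; rewrite orb_rep => ->.
  by rewrite EFinM muleAC muleC.
rewrite (esum_fibers orb); last first.
  by move=> x; apply: mule_ge0; [apply: esum_ge0 => q _ | apply: mule_ge0]; rewrite ?lee_fin.
apply: eq_esum => q' _.
transitivity (\esum_(x in [set x | orb x = q'])
   ((\esum_(q in [set: Q]) (mu x (rep q))%:E) * ((nubar q')%:E * h (rep q')))).
  apply: eq_esum => x /= orb_x; rewrite orb_x.
  have [g ->] : exists g, x = actX g (rep q') by apply/orbP; rewrite orb_rep.
  by rewrite h_inv.
rewrite (@esumZr _ _ _ (fun x => \esum_(q in [set: Q]) (mu x (rep q))%:E)); last 2 first.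
- by rewrite mule_ge0 ?lee_fin.
- by move=> x; apply: esum_ge0 => q _; rewrite lee_fin.
by rewrite esum_orbit_walk_reps mul1e.
Qed.

Lemma kernel_integral_mupow_invariant n (h : X -> \bar R) :
  (forall x, 0 <= h x) -> (forall g x, h (actX g x) = h x) ->
  kernel_integral nubar rep (mupow mu n) (fun _ y => h y) =
  \esum_(q in [set: Q]) ((nubar q)%:E * h (rep q)).
Proof.
elim: n h => [|n IH] h h_ge0 h_inv.
  by apply: eq_esum => q _; rewrite /= esum_delta.
pose step x := \esum_(y in [set: X]) ((mu x y)%:E * h y).
have step_ge0 x : 0 <= step x by apply: esum_ge0 => y _; rewrite mule_ge0 ?lee_fin.
have step_inv g x : step (actX g x) = step x.
  exact: (esum_walk_act (F := fun _ y => h y)).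
transitivity (kernel_integral nubar rep (mupow mu n) (fun _ y => step y)).
  by apply: eq_esum => q _; rewrite (mupowS_esum mu_ge0).
by rewrite IH //; exact: kernel_integral_walk_invariant.
Qed.

Context {Y : Type} {d : Y -> Y -> R} {actY : G -> Y -> Y} {p : R}.
Hypotheses (d_metric : is_metric d) (actY_iso : isometric_action d actY).
Hypothesis p_gt0 : (0 < p)%R.

Let p_ge0 : (0 <= p)%R. Proof. exact: ltW. Qed.

Lemma pdist_act (f g : X -> Y) : equivariant_map actX actY f ->
  equivariant_map actX actY g ->
  forall h x x', pdist d p f g (actX h x) (actX h x') = pdist d p f g x x'.
Proof. by move=> f_equiv g_equiv h x x'; rewrite /pdist f_equiv g_equiv actY_iso. Qed.

Lemma dist_pC (f g : X -> Y) : dist_p d p nubar rep f g = dist_p d p nubar rep g f.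
Proof.
have [_ _ dC _] := d_metric.
by congr poweR; apply: eq_esum => q _; rewrite dC.
Qed.

Lemma dist_p_lt_pinfty (f g : X -> Y) : dist_p d p nubar rep f g < +oo ->
  \esum_(q in [set: Q]) ((nubar q)%:E * pdist d p f g (rep q) (rep q)) < +oo.
Proof.
move/lty_poweRy; rewrite invr_neq0 ?gt_eqF // => /(_ isT).
by under eq_esum do rewrite EFinM.
Qed.

Lemma energy_lt_pinfty_transfer (f g : X -> Y) :
  equivariant_map actX actY f -> equivariant_map actX actY g ->
  dist_p d p nubar rep f g < +oo ->
  kernel_integral nubar rep (fun x x' => (mu x x')%:E) (pdist d p f f) < +oo ->
  kernel_integral nubar rep (fun x x' => (mu x x')%:E) (pdist d p g g) < +oo.
Proof.
move=> f_equiv g_equiv /dist_p_lt_pinfty dist_fin energy_f_fin.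
have [_ _ dC _] := d_metric.
have fg_diag_fin : kernel_integral nubar rep (fun x x' => (mu x x')%:E)
    (fun x _ => pdist d p g f x x) < +oo.
  rewrite kernel_integral_walk_const => [|x]; last exact: pdist_ge0.
  by under eq_esum do rewrite /pdist dC.
have fg_end_fin : kernel_integral nubar rep (fun x x' => (mu x x')%:E)
    (fun _ x' => pdist d p f g x' x') < +oo.
  rewrite kernel_integral_walk_invariant // => [x|h x]; first exact: pdist_ge0.
  exact: pdist_act.
have fg_fin : kernel_integral nubar rep (fun x x' => (mu x x')%:E) (pdist d p f g) < +oo.
  apply: (kernel_integral_lt_pinfty nubar_ge0 mu_ge0E (powR_ge0 2 p) _ _ _
    energy_f_fin fg_end_fin) => x x'; [exact: pdist_ge0 | exact: pdist_ge0 |].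
  exact: (le_pdist d_metric p_ge0).
apply: (kernel_integral_lt_pinfty nubar_ge0 mu_ge0E (powR_ge0 2 p) _ _ _
  fg_diag_fin fg_fin) => x x'; [exact: pdist_ge0 | exact: pdist_ge0 |].
exact: (le_pdist d_metric p_ge0).
Qed.

Lemma esum_walk_pdist_le (f : X -> Y) x z :
  \esum_(y in [set: X]) ((mu z y)%:E * pdist d p f f x y) <=
  (2 `^ p)%:E * (pdist d p f f x z +
                 \esum_(y in [set: X]) ((mu z y)%:E * pdist d p f f z y)).
Proof.
apply: (@le_trans _ _ (\esum_(y in [set: X]) ((2 `^ p)%:E *
    ((mu z y)%:E * pdist d p f f x z + (mu z y)%:E * pdist d p f f z y)))).
  apply: le_esum => y _; rewrite -ge0_muleDr ?pdist_ge0 // muleCA.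
  by rewrite lee_wpmul2l // (le_pdist d_metric p_ge0).
rewrite esumZl ?lee_fin ?powR_ge0 // => [|y]; last first.
  by rewrite adde_ge0 ?mule_ge0 ?pdist_ge0.
rewrite esumD => [|y _|y _]; last 2 first.
- by rewrite mule_ge0 ?pdist_ge0.
- by rewrite mule_ge0 ?pdist_ge0.
by rewrite esumZr ?mu_sum1 ?mul1e ?pdist_ge0.
Qed.

Lemma mupow_energy_lt_pinfty (f : X -> Y) : equivariant_map actX actY f ->
  kernel_integral nubar rep (fun x x' => (mu x x')%:E) (pdist d p f f) < +oo ->
  forall n, kernel_integral nubar rep (mupow mu n) (pdist d p f f) < +oo.
Proof.
move=> f_equiv energy_fin; elim=> [|n IH].
  have [_ d_eq0 _ _] := d_metric.
  rewrite /kernel_integral esum1 ?ltry // => q _ /=.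
  rewrite esum_delta => [|x]; last exact: pdist_ge0.
  by rewrite /pdist (d_eq0 _ _).2 // powR0 ?gt_eqF ?mule0.
pose step z := \esum_(y in [set: X]) ((mu z y)%:E * pdist d p f f z y).
have step_ge0 z : 0 <= step z.
  by apply: esum_ge0 => y _; apply: mule_ge0; [exact: mu_ge0E | exact: pdist_ge0].
have step_inv h z : step (actX h z) = step z.
  by apply: esum_walk_act; exact: pdist_act.
have -> : kernel_integral nubar rep (mupow mu n.+1) (pdist d p f f) =
    kernel_integral nubar rep (mupow mu n)
      (fun x z => \esum_(y in [set: X]) ((mu z y)%:E * pdist d p f f x y)).
  apply: eq_esum => q _; rewrite (mupowS_esum mu_ge0) // => y.
  exact: pdist_ge0.
apply: (kernel_integral_lt_pinfty nubar_ge0 (mupow_ge0 mu_ge0 n) (powR_ge0 2 p)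
  (h2 := fun _ z => step z) _ _ _ IH) => [x x'|x x'|x z|].
- exact: pdist_ge0.
- exact: step_ge0.
- exact: esum_walk_pdist_le.
- by rewrite kernel_integral_mupow_invariant.
Qed.

End EquivariantWalk.

Lemma energy_lt_pinfty (R : realType) (X Q : choiceType) (Y : Type)
    (d : Y -> Y -> R) (p : R) (nubar : Q -> R) (rep : Q -> X)
    (eta : X -> X -> \bar R) (f : X -> Y) :
  (energy d p nubar rep eta f < +oo)%E =
  (kernel_integral nubar rep eta (pdist d p f f) < +oo)%E.
Proof. by rewrite /energy gt0_mule_lt_pinfty ?invr_gt0. Qed.

Unset Implicit Arguments. Set Strict Implicit.

Theorem lemma3p6
  (R : realType) (p cY : R)
  (Y : Type) (d : Y -> Y -> R)
  (G : Type) (mul : G -> G -> G) (one : G) (inv : G -> G)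
  (X Q : choiceType) (actX : G -> X -> X) (actY : G -> Y -> Y)
  (orb : X -> Q) (rep : Q -> X)
  (mu : X -> X -> R) (nubar : Q -> R) :
  2 <= p -> 0 < cY ->
  is_metric d -> complete_metric d -> geodesic_space d ->
  p_uniformly_convex d p cY ->
  is_group mul one inv ->
  is_action mul one actX -> free_action one actX ->
  is_action mul one actY -> isometric_action d actY ->
  (forall q, orb (rep q) = q) ->
  (forall x x', orb x = orb x' <-> exists g, x' = actX g x) ->
  random_walk mu -> equivariant_walk actX mu ->
  (forall q, 0 <= nubar q) -> (\esum_(q in setT) (nubar q)%:E = 1)%E ->
  (forall x x', nubar (orb x) * mu x x' = nubar (orb x') * mu x' x) ->
  (forall f g : X -> Y, equivariant_map actX actY f -> equivariant_map actX actY g ->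
     (dist_p d p nubar rep f g < +oo)%E ->
     (in_B actX actY d p nubar rep mu f <-> in_B actX actY d p nubar rep mu g))
  /\
  (forall f : X -> Y, in_B actX actY d p nubar rep mu f ->
     forall n : nat, (1 <= n)%N -> (energy d p nubar rep (mupow mu n) f < +oo)%E).
Proof.
move=> p_ge2 _ d_metric _ _ _ G_group actX_action actX_free _ actY_iso
  orb_rep orbP mu_walk mu_equiv nubar_ge0 _ nubar_rev.
have p_gt0 : 0 < p by lra.
have transfer := energy_lt_pinfty_transfer G_group actX_action actX_free orb_rep
  orbP mu_walk mu_equiv nubar_ge0 nubar_rev d_metric actY_iso p_gt0.
have iterate := mupow_energy_lt_pinfty G_group actX_action actX_free orb_rep
  orbP mu_walk mu_equiv nubar_ge0 nubar_rev d_metric actY_iso p_gt0.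
split=> [f g f_equiv g_equiv dist_fg_fin | f [f_equiv]].
  have dist_gf_fin : (dist_p d p nubar rep g f < +oo)%E.
    by rewrite -(dist_pC d_metric).
  rewrite /in_B !energy_lt_pinfty; split=> -[_ energy_fin].
  - split; [exact: g_equiv | exact: transfer f_equiv g_equiv dist_fg_fin energy_fin].
  - split; [exact: f_equiv | exact: transfer g_equiv f_equiv dist_gf_fin energy_fin].
rewrite energy_lt_pinfty => energy_fin n _.
by rewrite energy_lt_pinfty; exact: iterate f_equiv energy_fin n.
Qed.
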